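(* Let $p,b$ be distinct primes and $a,c$ positive integers such that $c$ is a primitive divisor of $p^a-1$. If $b\mid p^a-1$ and $b\nmid\tfrac{p^a-1}{c}$, then $$g\Big(\tfrac{p^{ab}-1}{bc},\,p^{ab}\Big)=b\,g\Big(\tfrac{p^a-1}{c},\,p^a\Big).$$
   Context: For a prime power $q$ and a positive integer $k$, the Waring number $g(k,q)$ is the smallest $s$ (if it exists) such that every element of $\mathbb{F}_q$ is a sum of $s$ $k$-th powers of elements of $\mathbb{F}_q$. An integer $e$ is a primitive divisor of $p^a-1$ if $e\mid p^a-1$ and $e\nmid p^t-1$ for every $1\le t<a$. *)

From HB Require Import structures.
From mathcomp Require Import all_boot all_order all_algebra all_field.
Set Implicit Arguments. Unset Strict Implicit. Unset Printing Implicit Defensive.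
Import GRing.Theory.

Definition primitive_divisor (e p a : nat) : Prop :=
  (e %| p ^ a - 1)%N /\ forall t : nat, (1 <= t)%N -> (t < a)%N -> ~~ (e %| p ^ t - 1)%N.

Definition waring_sum (F : finFieldType) (k s : nat) : Prop :=
  forall x : F, exists xs : s.-tuple F, x = (\sum_(i < s) (tnth xs i) ^+ k)%R.

Definition is_waring_number (F : finFieldType) (k g : nat) : Prop :=
  waring_sum F k g /\ forall s, waring_sum F k s -> (g <= s)%N.

From HB Require Import structures.
From mathcomp Require Import all_boot all_order all_algebra all_field cyclic.
From Stdlib Require Import Classical.
Set Implicit Arguments. Unset Strict Implicit. Unset Printing Implicit Defensive.
Import GRing.Theory.

(* Write q = p^a, k = (q-1)/c, K = (q^b-1)/(bc) and embed F_q into F_{q^b}.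
   The nonzero K-th powers of F_{q^b} are the (bc)-th roots of unity, generated
   by some h; since b does not divide k, z = h^(q-1) is a primitive b-th root of
   unity.  So the conjugates h^(q^j) = h z^j (j < b) are distinct, which makes
   1, h, ..., h^(b-1) a basis of F_{q^b} over F_q, and the K-th powers are exactly
   the t^k h^i (t in F_q, i < b).  Collecting a sum of K-th powers along this
   basis writes every coordinate as a sum of k-th powers, the numbers of terms
   adding up, whence g(K, q^b) = b g(k, q).  The number g(k, q) exists because,
   c being a primitive divisor, the conjugates of the c-th root of unity w^k are
   distinct, so its first a powers, all of them k-th powers, form a basis of
   F_q over F_p. *)

Lemma primitive_divisor_expn_inj (p c a i j : nat) :
  prime p -> primitive_divisor c p a -> i < a -> j < a ->
  p ^ i = p ^ j %[mod c] -> i = j.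
Proof.
move=> p_pr [c_dvd c_prim]; wlog le_ij : i j / i <= j.
  move=> wlog_ij i_lt j_lt eq_ij; have [le_ij | /ltnW le_ji] := leqP i j.
    exact: wlog_ij.
  exact/esym/wlog_ij.
move=> _ j_lt /eqP eq_ij; apply/eqP; rewrite eqn_leq le_ij leqNgt /=.
apply/negP => lt_ij; have p_gt0 := prime_gt0 p_pr.
have cp : coprime c p.
  rewrite coprime_sym prime_coprime //; apply: contraL p_pr => /dvdn_trans/(_ c_dvd) p_dvd.
  have a_gt0 : 0 < a := leq_ltn_trans (leq0n j) j_lt.
  have := dvdn_sub (dvdn_exp a_gt0 (dvdnn p)) p_dvd.
  by rewrite subKn ?expn_gt0 ?p_gt0 // dvdn1 => /eqP->.
have ji_gt0 : 0 < j - i by rewrite subn_gt0.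
apply/negP: (c_prim _ ji_gt0 (leq_ltn_trans (leq_subr i j) j_lt)).
rewrite -(@Gauss_dvdr _ (p ^ i)) ?coprimeXr // mulnBr muln1 -expnD subnKC //.
by rewrite -eqn_mod_dvd ?leq_pexp2l // negbK eq_sym.
Qed.

Lemma dvdn_sum_expn (b q : nat) : 0 < q -> b %| q - 1 -> b %| \sum_(i < b) q ^ i.
Proof.
move=> q_gt0 b_dvd; have q_mod : q = 1 %[mod b] by apply/eqP; rewrite eqn_mod_dvd.
rewrite /dvdn -modn_summ (eq_bigr (fun _ => 1 %% b)) => [|i _].
  by rewrite sum_nat_const card_ord modnMmr modnMr.
by rewrite -modnXm q_mod modnXm exp1n.
Qed.

Lemma mul_dvdn_expn_sub1 (b c q : nat) :
  0 < q -> b %| q - 1 -> c %| q - 1 -> b * c %| q ^ b - 1.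
Proof.
move=> q_gt0 b_dvd c_dvd; rewrite !subn1 predn_exp mulnC dvdn_mul //.
  by rewrite -subn1.
exact: dvdn_sum_expn.
Qed.

Lemma gcdn_sub1_mul (b c q : nat) :
  prime b -> c %| q - 1 -> ~~ (b %| (q - 1) %/ c) -> gcdn (q - 1) (b * c) = c.
Proof.
move=> b_pr c_dvd b_ndvd; rewrite -(divnK c_dvd) -muln_gcdl.
have /eqP -> : coprime ((q - 1) %/ c) b by rewrite coprime_sym prime_coprime.
by rewrite mul1n.
Qed.

Local Open Scope ring_scope.

Section SumsOfPowers.
Variables (R : nzRingType) (k : nat).

Definition sum_of_pows (n : nat) (x : R) :=
  exists xs : n.-tuple R, x = \sum_(i < n) tnth xs i ^+ k.

Lemma sum_of_pows0 : sum_of_pows 0 0.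
Proof. by exists [tuple]; rewrite big_ord0. Qed.

Lemma sum_of_pows_exp y : sum_of_pows 1 (y ^+ k).
Proof. by exists [tuple y]; rewrite big_ord1. Qed.

Lemma sum_of_powsD m n x y :
  sum_of_pows m x -> sum_of_pows n y -> sum_of_pows (m + n) (x + y).
Proof.
move=> [xs ->] [ys ->]; exists [tuple of xs ++ ys].
by rewrite big_split_ord; congr (_ + _); apply: eq_bigr => i _;
  rewrite ?tnth_lshift ?tnth_rshift.
Qed.

Lemma sum_of_pows_big (I : Type) (r : seq I) (P : pred I) (n : I -> nat) (f : I -> R) :
  (forall i, P i -> sum_of_pows (n i) (f i)) ->
  sum_of_pows (\sum_(i <- r | P i) n i)%N (\sum_(i <- r | P i) f i).
Proof.
move=> sum_f; apply: (big_ind2 sum_of_pows) => //; first exact: sum_of_pows0.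
by move=> ? ? ? ?; apply: sum_of_powsD.
Qed.

Lemma sum_of_pows_muln y n : sum_of_pows n (y ^+ k *+ n).
Proof.
have := @sum_of_pows_big 'I_n (index_enum 'I_n) xpredT (fun=> 1%N) (fun=> y ^+ k).
rewrite !sumr_const card_ord natn; apply=> i _; apply: sum_of_pows_exp.
Qed.

Lemma sum_of_pows_widen m n x :
  (0 < k)%N -> (m <= n)%N -> sum_of_pows m x -> sum_of_pows n x.
Proof.
move=> k_gt0 le_mn sum_x; rewrite -(subnKC le_mn) -[x]addr0.
apply: sum_of_powsD => //; have := sum_of_pows_muln 0 (n - m).
by rewrite expr0n eqn0Ngt k_gt0 mul0rn.
Qed.

End SumsOfPowers.

Section WaringNumber.
Variables (F : finFieldType) (k : nat).

Lemma sum_of_powsP n (x : F) :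
  reflect (sum_of_pows k n x) [exists xs : n.-tuple F, x == \sum_(i < n) tnth xs i ^+ k].
Proof. by apply: (iffP existsP) => -[xs /eqP]; exists xs. Qed.

Definition waring_sumb s :=
  [forall x, [exists xs : s.-tuple F, x == \sum_(i < s) tnth xs i ^+ k]].

Lemma waring_sumP s : reflect (waring_sum F k s) (waring_sumb s).
Proof.
apply: (iffP forallP) => [sum_x x | sum_x x]; first exact/sum_of_powsP.
exact/sum_of_powsP/sum_x.
Qed.

Lemma waring_number_exists s : waring_sum F k s -> exists g, is_waring_number F k g.
Proof.
move=> /waring_sumP sum_s.
have [g /waring_sumP sum_g g_min] := ex_minnP (ex_intro waring_sumb s sum_s).
by exists g; split=> // t /waring_sumP; apply: g_min.
Qed.

Lemma waring_number_witness g :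
  is_waring_number F k g -> (0 < g)%N -> exists x : F, ~ sum_of_pows k g.-1 x.
Proof.
move=> [_ g_min] g_gt0.
have /waring_sumP/forallPn[x /sum_of_powsP] : ~ waring_sum F k g.-1.
  by move=> /g_min; rewrite leqNgt prednK ?leqnn.
by exists x.
Qed.

End WaringNumber.

Lemma frobenius_fixed_poly_eq0 (F : fieldType) (r n : nat) (f : {poly F}) (y : F) :
  [pchar F].-nat r -> (forall i, f`_i ^+ r = f`_i) ->
  uniq [seq y ^+ (r ^ j) | j <- iota 0 n] -> (size f <= n)%N -> root f y -> f = 0.
Proof.
move=> r_nat f_fixed y_uniq f_small f_y; have r_gt0 : (0 < r)%N by case/andP: r_nat.
(* x |-> x ^+ r is additive and fixes the coefficients, so every y ^+ (r ^ j) is a root. *)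
have frob_horner x : f.[x] ^+ r = f.[x ^+ r].
  rewrite !horner_coef (big_morph _ (fun a b => exprDn_pchar a b r_nat) (expr0n _ _)).
  by rewrite eqn0Ngt r_gt0; apply: eq_bigr => i _; rewrite exprMn f_fixed exprAC.
apply: roots_geq_poly_eq0 y_uniq _; last by rewrite size_map size_iota.
apply/allP => _ /mapP[j _ ->]; elim: j => [|j IH]; first by rewrite expr1.
by rewrite /root expnSr exprM -frob_horner (rootP IH) expr0n eqn0Ngt r_gt0.
Qed.

Lemma frobenius_fixed_sum_eq0 (F : fieldType) (r n : nat) (e : 'I_n -> F) (y : F) :
  [pchar F].-nat r -> (forall i, e i ^+ r = e i) ->
  uniq [seq y ^+ (r ^ j) | j <- iota 0 n] ->
  \sum_(i < n) e i * y ^+ i = 0 -> forall i, e i = 0.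
Proof.
move=> r_nat e_fixed y_uniq e_y; have r_gt0 : (0 < r)%N by case/andP: r_nat.
pose f := \poly_(j < n) (if insub j is Some i then e i else 0).
have coef_f (i : 'I_n) : f`_i = e i by rewrite coef_poly ltn_ord valK.
suff f0 : f = 0 by move=> i; rewrite -coef_f f0 coef0.
apply: (frobenius_fixed_poly_eq0 r_nat) y_uniq (size_poly _ _) _.
- have zero_fixed : (0 : F) ^+ r = 0 by rewrite expr0n eqn0Ngt r_gt0.
  move=> j; rewrite coef_poly; case: ifP => _ //.
  by case: insubP => [i _ _|_].
- rewrite /root horner_poly; apply/eqP; rewrite -[RHS]e_y.
  by apply: eq_bigr => i _; rewrite valK.
Qed.

Lemma pchar_nat_card (K : finFieldType) : [pchar K].-nat #|K|.
Proof.
have [p p_pr pK] := finPcharP K.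
have -> : #|K| = #|pPrimeCharType pK| by [].
rewrite card_pprimeChar pnatX (eq_pnat _ (pcharf_eq pK)) pnat_id //.
Qed.

Section PowerCombinations.
Variables (K : finFieldType) (F : fieldType) (phi : {rmorphism K -> F}) (n : nat) (y : F).

Definition pow_lincomb (e : {ffun 'I_n -> K}) : F := \sum_(i < n) phi (e i) * y ^+ i.

Lemma pow_lincomb_inj :
  uniq [seq y ^+ (#|K| ^ j) | j <- iota 0 n] -> injective pow_lincomb.
Proof.
move=> y_uniq e e' eq_e; apply/ffunP => i; apply: (fmorph_inj phi).
apply/eqP; rewrite -subr_eq0 -rmorphB; apply/eqP; move: i.
apply: (frobenius_fixed_sum_eq0 _ _ y_uniq).
- by rewrite (eq_pnat _ (fmorph_pchar phi)) pchar_nat_card.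
- by move=> i; rewrite -rmorphXn expf_card.
- under eq_bigr do rewrite rmorphB mulrBl.
  by rewrite sumrB; apply/eqP; rewrite subr_eq0; apply/eqP.
Qed.

End PowerCombinations.

Lemma pow_lincomb_surj (K F : finFieldType) (phi : {rmorphism K -> F}) (n : nat) (y : F) :
  uniq [seq y ^+ (#|K| ^ j) | j <- iota 0 n] -> (#|F| <= #|K| ^ n)%N ->
  forall x, exists e : {ffun 'I_n -> K}, x = pow_lincomb phi y e.
Proof.
move=> y_uniq card_F x.
have card_le : (#|F| <= #|{ffun 'I_n -> K}|)%N by rewrite card_ffun card_ord.
have /codomP[e ->] := inj_card_onto (pow_lincomb_inj (phi := phi) y_uniq) card_le x.
by exists e.
Qed.

Section PrimeSubfield.
Variables (p : nat) (R : nzRingType).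
Hypothesis pR : p \in [pchar R].

Definition Fp_embed (x : 'F_p) : R := (x : nat)%:R.

Lemma Fp_embed_nat n : Fp_embed n%:R = n%:R.
Proof. by rewrite /Fp_embed val_Fp_nat ?(pcharf_prime pR) // (GRing.natr_mod_pchar pR). Qed.

Lemma Fp_embedD x y : Fp_embed (x + y) = Fp_embed x + Fp_embed y.
Proof. by rewrite -[x]natr_Zp -[y]natr_Zp -natrD !Fp_embed_nat natrD. Qed.

Lemma Fp_embed_is_zmod_morphism : zmod_morphism Fp_embed.
Proof. by move=> x y; rewrite -[in RHS](subrK y x) [in RHS]Fp_embedD addrK. Qed.

Lemma Fp_embed_is_monoid_morphism : monoid_morphism Fp_embed.
Proof.
split=> [|x y]; first exact: (Fp_embed_nat 1).
by rewrite -[x]natr_Zp -[y]natr_Zp -natrM !Fp_embed_nat natrM.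
Qed.

Definition Fp_rmorph : {rmorphism 'F_p -> R} :=
  HB.pack Fp_embed (GRing.isZmodMorphism.Build _ _ _ Fp_embed_is_zmod_morphism)
    (GRing.isMonoidMorphism.Build _ _ _ Fp_embed_is_monoid_morphism).

End PrimeSubfield.

Section FiniteFieldFacts.
Variable F : finFieldType.

Lemma finField_prim_root : exists w : F, (#|F|.-1).-primitive_root w.
Proof.
have F_gt1 := finNzRing_gt1 F.
have : has (#|F|.-1).-primitive_root [seq x <- enum F | x != 0].
  apply: has_prim_root.
  - by rewrite -ltnS (ltn_predK F_gt1).
  - apply/allP => x; rewrite mem_filter => /andP[nz_x _].
    apply/unity_rootP; apply: (mulfI nz_x).
    by rewrite -exprS (ltn_predK F_gt1) expf_card mulr1.
  - by rewrite filter_uniq ?enum_uniq.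
  - rewrite -(cardC1 (0 : F)) cardE /enum_mem -filter_predI.
    by apply/eq_leq; congr size; apply: eq_filter => x /=; rewrite !inE andbT.
by case/hasP => w _ w_prim; exists w.
Qed.

Lemma expf_card_pred (x : F) : x != 0 -> x ^+ #|F|.-1 = 1.
Proof.
move=> nz_x; apply: (mulfI nz_x).
by rewrite -exprS (ltn_predK (finNzRing_gt1 F)) expf_card mulr1.
Qed.

Lemma dvdp_genPoly_root (Q : {poly F}) :
  (1 < size Q)%N -> Q %| 'X^#|F| - 'X -> exists x, root Q x.
Proof.
rewrite finField_genPoly => Q_gt1 /dvdp_prod_XsubC[m].
case: (mask m _) => [|x s] eqQ.
  by move: Q_gt1; rewrite (eqp_size eqQ) big_nil size_poly1.
by exists x; rewrite (eqp_root eqQ) root_prod_XsubC mem_head.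
Qed.

Lemma expf_card_expn (x : F) n : x ^+ (#|F| ^ n) = x.
Proof. by elim: n => [|n IH]; rewrite ?expr1 // expnSr exprM IH expf_card. Qed.

End FiniteFieldFacts.

Lemma rmorph_factor (A B C : nzRingType) (f : {rmorphism A -> B}) (g : {rmorphism A -> C}) :
  (forall y, exists x, f x = y) -> (forall x, f x = 0 -> g x = 0) ->
  {phi : {rmorphism B -> C} | forall x, phi (f x) = g x}.
Proof.
move=> f_surj ker_fg; have f_surjb y : exists x, f x == y.
  by have [x <-] := f_surj y; exists x.
pose phi y := g (xchoose (f_surjb y)).
have phiE x : phi (f x) = g x.
  apply/eqP; rewrite -subr_eq0 -rmorphB; apply/eqP/ker_fg.
  by rewrite rmorphB (eqP (xchooseP (f_surjb (f x)))) subrr.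
have phi_zmod : zmod_morphism phi.
  move=> x' y'; have [x <-] := f_surj x'; have [y <-] := f_surj y'.
  by rewrite -rmorphB !phiE rmorphB.
have phi_monoid : monoid_morphism phi.
  split=> [|x' y']; first by rewrite -(rmorph1 f) phiE rmorph1.
  have [x <-] := f_surj x'; have [y <-] := f_surj y'.
  by rewrite -rmorphM !phiE rmorphM.
pose phiR : {rmorphism B -> C} := HB.pack phi
  (GRing.isZmodMorphism.Build _ _ _ phi_zmod) (GRing.isMonoidMorphism.Build _ _ _ phi_monoid).
by exists phiR.
Qed.

Lemma poly_ker_principal (K : fieldType) (R : nzRingType) (ev : {rmorphism {poly K} -> R})
    (f0 : {poly K}) :
  f0 != 0 -> ev f0 = 0 -> exists2 P, P != 0 & forall f, (ev f == 0) = (P %| f).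
Proof.
have [n] := ubnP (size f0); elim: n f0 => // n IH P /ltnSE size_P nz_P ev_P.
have [[f ev_f P_ndvd_f] | P_gen] := classic (exists2 f, ev f = 0 & ~~ (P %| f)).
  apply: (IH (f %% P)); first by apply: leq_trans size_P; rewrite ltn_modp.
    by apply: contra P_ndvd_f => /eqP/modp_eq0P.
  have := congr1 ev (divp_eq f P).
  by rewrite rmorphD rmorphM ev_P mulr0 add0r ev_f.
exists P => // f; apply/eqP/idP => [ev_f | /dvdpP[q ->]].
  by apply/negPn/negP => P_ndvd_f; apply: P_gen; exists f.
by rewrite rmorphM ev_P mulr0.
Qed.

Lemma finField_embedding (p : nat) (F2 F1 : finFieldType) :
  p \in [pchar F2] -> p \in [pchar F1] -> (forall x : F2, x ^+ #|F1| = x) ->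
  inhabited {rmorphism F2 -> F1}.
Proof.
(* F2 = F_p[w], and the generator of the kernel of evaluation at w divides X^|F1| - X,
   which splits over F1: evaluation at one of its roots in F1 factors through F2. *)
move=> pF2 pF1 F2_roots.
have [w w_prim] := finField_prim_root F2.
pose ev2 : {rmorphism {poly 'F_p} -> F2} :=
  horner_morph (fun a => mulrC w (Fp_rmorph pF2 a)).
have ev2_X : ev2 'X = w by apply: horner_morphX.
have ev2_surj x : exists f, ev2 f = x.
  have [->|nz_x] := eqVneq x 0; first by exists 0; rewrite rmorph0.
  have [i ->] := prim_rootP w_prim (expf_card_pred nz_x).
  by exists 'X^i; rewrite rmorphXn ev2_X.
pose G : {poly 'F_p} := 'X^#|F1| - 'X.
have nz_G : G != 0.
  rewrite -size_poly_eq0 size_polyDl ?size_polyXn //.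
  by rewrite size_polyN size_polyX ltnS finNzRing_gt1.
have ev2_G : ev2 G = 0 by rewrite rmorphB rmorphXn ev2_X F2_roots subrr.
have [P nz_P ker_P] := poly_ker_principal nz_G ev2_G.
have ev2_P : ev2 P = 0 by apply/eqP; rewrite ker_P.
have [h P_h] : exists h, root (map_poly (Fp_rmorph pF1) P) h.
  apply: dvdp_genPoly_root.
    rewrite size_map_poly ltnNge; apply: contra nz_P => /size1_polyC P_a.
    have ev2_C a : ev2 a%:P = Fp_rmorph pF2 a by apply: horner_morphC.
    by rewrite P_a polyC_eq0 -(fmorph_eq0 (Fp_rmorph pF2)) -ev2_C -P_a ev2_P.
  have map_G : map_poly (Fp_rmorph pF1) G = 'X^#|F1| - 'X.
    by rewrite -(map_polyXn (Fp_rmorph pF1)) -(map_polyX (Fp_rmorph pF1)) -rmorphB.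
  by rewrite -map_G dvdp_map -ker_P ev2_G.
pose ev1 : {rmorphism {poly 'F_p} -> F1} :=
  horner_morph (fun a => mulrC h (Fp_rmorph pF1 a)).
have ev1_P : ev1 P = 0 by exact: rootP P_h.
have ker_ev1 f : ev2 f = 0 -> ev1 f = 0.
  by move/eqP; rewrite ker_P => /dvdpP[q ->]; rewrite rmorphM ev1_P mulr0.
by have [phi _] := rmorph_factor ev2_surj ker_ev1; constructor.
Qed.

Lemma waring_sum_prime_field (p a c : nat) (F : finFieldType) :
  prime p -> #|F| = (p ^ a)%N -> primitive_divisor c p a ->
  waring_sum F ((p ^ a - 1) %/ c) (a * p).
Proof.
move=> p_pr F_card pd; set k := ((p ^ a - 1) %/ c)%N.
have pF := card_finPcharP F_card p_pr.
have q_gt1 : (1 < p ^ a)%N by rewrite -F_card finNzRing_gt1.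
have c_dvd : (c %| p ^ a - 1)%N by case: pd.
have k_gt0 : (0 < k)%N.
  have c_gt0 : (0 < c)%N by apply: dvdn_gt0 c_dvd; rewrite subn_gt0.
  by rewrite divn_gt0 // dvdn_leq ?subn_gt0.
have [w] := finField_prim_root F; rewrite F_card -subn1 => w_prim.
have v_prim : c.-primitive_root (w ^+ k) := dvdn_prim_root w_prim c_dvd.
have v_uniq : uniq [seq (w ^+ k) ^+ (#|'F_p| ^ j) | j <- iota 0 a].
  rewrite map_inj_in_uniq ?iota_uniq // => i j; rewrite !mem_iota !add0n card_Fp //.
  move=> /andP[_ i_lt] /andP[_ j_lt] /eqP.
  rewrite (eq_prim_root_expr v_prim) => /eqP.
  exact: (primitive_divisor_expn_inj p_pr pd i_lt j_lt).
move=> x; have [|e ->] := pow_lincomb_surj (Fp_rmorph pF) v_uniq _ x.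
  by rewrite F_card card_Fp.
apply: (sum_of_pows_widen (m := (\sum_(i < a) (e i : nat))%N) k_gt0).
  apply: (@leq_trans (\sum_(i < a) p)%N).
    apply: leq_sum => i _; apply: ltnW.
    by rewrite -[e i]natr_Zp val_Fp_nat // ltn_pmod ?prime_gt0.
  by rewrite sum_nat_const card_ord mulnC.
apply: sum_of_pows_big => i _.
by rewrite /= /Fp_embed mulr_natl exprAC; apply: sum_of_pows_muln.
Qed.

Lemma expr_iter_twist (R : comNzRingType) (x y : R) (q j : nat) :
  x ^+ q = x * y -> y ^+ q = y -> x ^+ (q ^ j) = x * y ^+ j.
Proof.
move=> x_q y_q; elim: j => [|j IH]; first by rewrite expr0 mulr1.
by rewrite expnSr exprM IH exprMn x_q exprAC y_q -mulrA -exprS.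
Qed.

Section ExtensionOfPrimeDegree.
Variables (q b c : nat) (F1 F2 : finFieldType) (phi : {rmorphism F2 -> F1}) (u : F1).
Hypothesis b_pr : prime b.
Hypotheses (F1_card : #|F1| = (q ^ b)%N) (F2_card : #|F2| = q).
Hypotheses (c_dvd : (c %| q - 1)%N) (b_dvd : (b %| q - 1)%N).
Hypothesis b_ndvd : ~~ (b %| (q - 1) %/ c)%N.
Hypothesis u_prim : (q ^ b - 1)%N.-primitive_root u.

Local Notation k := ((q - 1) %/ c)%N.
Local Notation K := ((q ^ b - 1) %/ (b * c))%N.

Local Notation h := (u ^+ K).
Local Notation z := (h ^+ (q - 1)).

Let q_gt1 : (1 < q)%N.
Proof. by rewrite -subn_gt0 lt0n; apply: contraNneq b_ndvd => ->; rewrite div0n. Qed.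

Let c_gt0 : (0 < c)%N.
Proof. by apply: dvdn_gt0 c_dvd; rewrite subn_gt0. Qed.

Let k_gt0 : (0 < k)%N.
Proof. by rewrite lt0n; apply: contraNneq b_ndvd => ->. Qed.

Let bc_dvd : (b * c %| q ^ b - 1)%N.
Proof. by rewrite mul_dvdn_expn_sub1 // ltnW. Qed.

Let K_gt0 : (0 < K)%N.
Proof.
have qb_gt1 : (1 < q ^ b)%N by rewrite -{1}(exp1n b) ltn_exp2r // prime_gt0.
rewrite divn_gt0 ?muln_gt0 ?c_gt0 ?prime_gt0 //.
by apply: dvdn_leq bc_dvd; rewrite subn_gt0.
Qed.

Let h_prim : (b * c).-primitive_root h.
Proof. exact (dvdn_prim_root u_prim bc_dvd). Qed.

Let hb_prim : c.-primitive_root (h ^+ b).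
Proof. by have := dvdn_prim_root h_prim (dvdn_mull b (dvdnn c)); rewrite mulnK // -exprM. Qed.

Let z_prim : b.-primitive_root z.
Proof. by have := exp_prim_root h_prim (q - 1); rewrite gcdn_sub1_mul // mulnK. Qed.

Let exp_h_iter j : h ^+ (q ^ j) = h * z ^+ j.
Proof.
have q_mod : (q %% b = 1)%N.
  by rewrite -(modn_small (prime_gt1 b_pr)); apply/eqP; rewrite eqn_mod_dvd // ltnW.
have z_q : z ^+ q = z by rewrite -(prim_expr_mod z_prim) q_mod expr1.
apply: expr_iter_twist z_q.
by rewrite -[X in _ ^+ X = _](subnK (ltnW q_gt1)) addn1 exprS.
Qed.

Let h_frob_uniq : uniq [seq h ^+ (#|F2| ^ j) | j <- iota 0 b].
Proof.
have nz_h : h != 0 by rewrite (prim_root_eq0 h_prim) muln_eq0 negb_or -!lt0n prime_gt0.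
rewrite map_inj_in_uniq ?iota_uniq // => i j; rewrite !mem_iota !add0n F2_card.
move=> /andP[_ i_lt] /andP[_ j_lt]; rewrite !exp_h_iter => /(mulfI nz_h)/eqP.
by rewrite (eq_prim_root_expr z_prim) !modn_small // => /eqP.
Qed.

Let expK_of_coord (t : F2) (i : nat) : exists y : F1, phi (t ^+ k) * h ^+ i = y ^+ K.
Proof.
have [-> | nz_t] := eqVneq t 0.
  by exists 0; rewrite !expr0n !eqn0Ngt k_gt0 K_gt0 rmorph0 mul0r.
have : phi (t ^+ k) ^+ c = 1.
  by rewrite -rmorphXn -exprM divnK // -F2_card subn1 expf_card_pred ?rmorph1.
case/(prim_rootP hb_prim) => j ->.
by exists (u ^+ (b * j + i)); rewrite [RHS]exprAC exprD exprM.
Qed.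

Let coord_of_expK (y : F1) : exists it : 'I_b * F2, y ^+ K = phi (it.2 ^+ k) * h ^+ it.1.
Proof.
have b_gt0 := prime_gt0 b_pr.
have [-> | nz_y] := eqVneq y 0.
  exists (Ordinal b_gt0, 0).
  by rewrite !expr0n !eqn0Ngt k_gt0 K_gt0 /= !mulr0n rmorph0 mul0r.
have : y ^+ (q ^ b - 1) = 1 by rewrite -F1_card subn1 expf_card_pred.
case/(prim_rootP u_prim) => m ->.
rewrite exprAC (divn_eq m b) exprD (mulnC (m %/ b)%N) exprM.
have [w w_prim] := finField_prim_root F2; rewrite F2_card -subn1 in w_prim.
have v_prim : c.-primitive_root (phi (w ^+ k)).
  by rewrite fmorph_primitive_root; exact (dvdn_prim_root w_prim c_dvd).
have : ((h ^+ b) ^+ (m %/ b)) ^+ c = 1.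
  by rewrite exprAC (prim_expr_order hb_prim) expr1n.
case/(prim_rootP v_prim) => l ->.
by exists (Ordinal (ltn_pmod m b_gt0), w ^+ l); rewrite /= -rmorphXn exprAC.
Qed.

Let sum_of_pows_lincomb (g : nat) (e : {ffun 'I_b -> F2}) :
  (forall i, sum_of_pows k g (e i)) -> sum_of_pows K (b * g) (pow_lincomb phi h e).
Proof.
move=> sum_e; have -> : (b * g = \sum_(i < b) g)%N by rewrite sum_nat_const card_ord.
apply: sum_of_pows_big => i _; have [ts ->] := sum_e i.
rewrite rmorph_sum mulr_suml -[g in sum_of_pows _ g]card_ord -sum1_card.
apply: sum_of_pows_big => j _; have [y ->] := expK_of_coord (tnth ts j) i.
exact: sum_of_pows_exp.
Qed.

Let sum_of_pows_lincombP (s : nat) (e : {ffun 'I_b -> F2}) :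
  sum_of_pows K s (pow_lincomb phi h e) ->
  exists n : 'I_b -> nat, (\sum_(i < b) n i)%N = s /\ forall i, sum_of_pows k (n i) (e i).
Proof.
move=> [ys e_ys]; have [it itE] := fin_all_exists (fun j => coord_of_expK (tnth ys j)).
pose e' := [ffun i => \sum_(j < s | (it j).1 == i) (it j).2 ^+ k].
have e_e' : e = e'.
  apply: (pow_lincomb_inj (phi := phi) h_frob_uniq).
  rewrite e_ys (eq_bigr _ (fun j _ => itE j)).
  rewrite (partition_big (fun j => (it j).1) xpredT) //=.
  apply: eq_bigr => i _; rewrite ffunE rmorph_sum mulr_suml.
  by apply: eq_bigr => j /eqP ->; rewrite rmorphXn.
exists (fun i => \sum_(j < s | (it j).1 == i) 1)%N; split.
  transitivity (\sum_(j < s) 1)%N; last by rewrite sum_nat_const card_ord muln1.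
  by rewrite [RHS](partition_big (fun j => (it j).1) xpredT).
by move=> i; rewrite e_e' ffunE; apply: sum_of_pows_big => j _; apply: sum_of_pows_exp.
Qed.

Lemma waring_number_extension (g : nat) :
  is_waring_number F2 k g -> is_waring_number F1 K (b * g).
Proof.
move=> [sum_g g_min]; split.
  move=> x; have [|e ->] := pow_lincomb_surj phi h_frob_uniq _ x.
    by rewrite F1_card F2_card.
  by apply: sum_of_pows_lincomb => i; apply: sum_g.
move=> s sum_s; have [-> | g_gt0] := posnP g; first by rewrite muln0.
have [x0 x0_hard] := waring_number_witness (conj sum_g g_min) g_gt0.
have [n [<- sum_n]] := sum_of_pows_lincombP (sum_s (pow_lincomb phi h [ffun=> x0])).
rewrite -[X in (X * g)%N]card_ord -sum_nat_const; apply: leq_sum => i _.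
rewrite leqNgt; apply/negP => n_lt_g; apply: x0_hard.
have := sum_n i; rewrite ffunE; apply: sum_of_pows_widen => //.
by rewrite -ltnS prednK.
Qed.

End ExtensionOfPrimeDegree.

Local Close Scope ring_scope.

(* The hypotheses [p != b], [0 < a] and [0 < c] follow from the others. *)
Theorem mainTheorem6 (p b a c : nat) (F1 F2 : finFieldType) :
  prime p -> prime b -> p != b -> (0 < a)%N -> (0 < c)%N ->
  primitive_divisor c p a ->
  (b %| p ^ a - 1)%N -> ~~ (b %| (p ^ a - 1) %/ c)%N ->
  #|F1| = (p ^ (a * b))%N -> #|F2| = (p ^ a)%N ->
  (exists g, is_waring_number F2 ((p ^ a - 1) %/ c) g) /\
  (forall g, is_waring_number F2 ((p ^ a - 1) %/ c) g ->
     is_waring_number F1 ((p ^ (a * b) - 1) %/ (b * c)) (b * g)).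
Proof.
move=> p_pr b_pr _ _ _ pd b_dvd b_ndvd F1_card F2_card.
split; first exact: waring_number_exists (waring_sum_prime_field p_pr F2_card pd).
have [phi] : inhabited {rmorphism F2 -> F1}.
  apply: (finField_embedding (card_finPcharP F2_card p_pr) (card_finPcharP F1_card p_pr)).
  by move=> x; rewrite F1_card expnM -F2_card expf_card_expn.
rewrite expnM in F1_card *.
have [u] := finField_prim_root F1; rewrite F1_card -subn1 => u_prim.
have c_dvd : c %| p ^ a - 1 by case: pd.
exact (waring_number_extension phi b_pr F1_card F2_card c_dvd b_dvd b_ndvd u_prim).
Qed.
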